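(* Let $G\in\mathcal{F}$ and let $C$ be a clique of maximum size in $G$, chosen among all maximum cliques so that the number of edges with exactly one endpoint in $C$ is minimal. Then the vertex set of $C$ can be partitioned into two nonempty subsets $X$ and $Y$ such that for every vertex $v$ not in $C$, the set of neighbors of $v$ in $C$ is equal to $X$, to $Y$, or to $\emptyset$.
   Context: Graphs are finite and simple; spectrum means adjacency spectrum. $\mathcal{F}$ denotes the set of connected graphs whose spectrum consists of exactly one eigenvalue $r>2$, exactly one eigenvalue $s<-1$, and all remaining eigenvalues (with multiplicity) equal to $2$ or $-1$. *)

From HB Require Import structures.
From mathcomp Require Import all_boot all_order all_algebra all_field.
Set Implicit Arguments. Unset Strict Implicit. Unset Printing Implicit Defensive.
Import Order.TTheory GRing.Theory Num.Theory.
Local Open Scope ring_scope.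

Definition simple_graph (n : nat) (e : rel 'I_n) : Prop :=
  symmetric e /\ irreflexive e.

Definition connected_graph (n : nat) (e : rel 'I_n) : Prop :=
  (0 < n)%N /\ forall x y : 'I_n, connect e x y.

Definition adjmx (n : nat) (e : rel 'I_n) : 'M[algC]_n :=
  \matrix_(i, j) (e i j)%:R.

(* spectrum = multiset of roots of the characteristic polynomial:
   exactly one eigenvalue r > 2, exactly one s < -1, all others 2 or -1 *)
Definition spectrum_F (n : nat) (e : rel 'I_n) : Prop :=
  exists (r s : algC) (a b : nat),
    2 < r /\ s < -1 /\
    char_poly (adjmx e) =
      ('X - r%:P) * ('X - s%:P) * ('X - 2%:P) ^+ a * ('X + 1) ^+ b.

Definition in_F (n : nat) (e : rel 'I_n) : Prop :=
  simple_graph e /\ connected_graph e /\ spectrum_F e.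

Definition is_clique (n : nat) (e : rel 'I_n) (C : {set 'I_n}) : bool :=
  [forall x in C, forall y in C, (x != y) ==> e x y].

Definition is_max_clique (n : nat) (e : rel 'I_n) (C : {set 'I_n}) : Prop :=
  is_clique e C /\ forall D : {set 'I_n}, is_clique e D -> (#|D| <= #|C|)%N.

(* number of edges with exactly one endpoint in C (each edge counted once,
   as the ordered pair (inside endpoint, outside endpoint)) *)
Definition boundary_edges (n : nat) (e : rel 'I_n) (C : {set 'I_n}) : nat :=
  #|[set p : 'I_n * 'I_n | [&& e p.1 p.2, p.1 \in C & p.2 \notin C]]|.

Definition nbrs_in (n : nat) (e : rel 'I_n) (v : 'I_n) (C : {set 'I_n}) : {set 'I_n} :=
  [set u in C | e v u].

(* Write A for the adjacency matrix and M = A^2 - A - 2 = (A - 2)(A + 1).  For a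
   graph in F, M vanishes on the eigenspaces of 2 and -1 and is positive on the two
   remaining ones, so M = G G^* with G an n x 2 matrix; hence any three vectors have
   a nontrivial combination x with M x = 0.  For x supported on a clique C,
     x^* M x = (|C| - 3) |sum_C x|^2 + sum_{l outside C} |(A x)_l|^2.
   Let u, v be outside a maximum clique C, with traces on C that are nonempty
   (proper by maximality), distinct and not complementary.  Then C contains three
   vertices with distinct adjacency patterns to (u, v).  A combination x of their
   indicators with M x = 0 has (A x)_l = 0 outside C, then sum_C x = 0 by
   evaluating (M x)_u; as any three corners of the unit square are affinely
   independent, x = 0.  If no outside vertex sees C, any split of C works, and
   |C| >= 2 because M_ii = deg i - 2 >= 0. *)

From HB Require Import structures.
From mathcomp Require Import all_boot all_order all_algebra all_field.
From mathcomp Require Import ring.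
Set Implicit Arguments. Unset Strict Implicit. Unset Printing Implicit Defensive.
Import Order.TTheory GRing.Theory Num.Theory.
Local Open Scope ring_scope.
Local Open Scope sesquilinear_scope.

Lemma char_poly_conj n (P A : 'M[algC]_n) : P \in unitmx ->
  char_poly (invmx P *m A *m P) = char_poly A.
Proof.
move=> Pu; rewrite /char_poly /char_poly_mx.
have -> : 'X%:M - map_mx polyC (invmx P *m A *m P) =
  map_mx polyC (invmx P) *m ('X%:M - map_mx polyC A) *m map_mx polyC P.
  rewrite mulmxBr mulmxBl !map_mxM; congr (_ - _).
  by rewrite mul_mx_scalar -scalemxAl -map_mxM mulVmx // map_mx1 scalemx1.
by rewrite !det_mulmx mulrC mulrA -det_mulmx -map_mxM mulmxV // map_mx1 det1 mul1r.
Qed.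

Lemma sqrtC_mul_conj (x : algC) : 0 <= x -> sqrtC x * (sqrtC x)^* = x.
Proof. by move=> x_ge0; rewrite geC0_conj ?sqrtC_ge0 // -expr2 sqrtCK. Qed.

Lemma mulmx_trC_ge0 m n (G : 'M[algC]_(m, n)) i : 0 <= (G *m G^t*) i i.
Proof. by rewrite mxE sumr_ge0 // => k _; rewrite !mxE mul_conjC_ge0. Qed.

Section HermitianGram.

Variables (n : nat) (A : 'M[algC]_n) (r s : algC) (a b : nat).
Hypotheses (A_herm : A \is hermsymmx) (r_gt2 : 2 < r) (s_ltN1 : s < -1).
Hypothesis charA :
  char_poly A = ('X - r%:P) * ('X - s%:P) * ('X - 2%:P) ^+ a * ('X + 1) ^+ b.

Local Notation P := (spectralmx A).
Local Notation d l := (spectral_diag A 0 l).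

Let A_spectral : A = P^t* *m diag_mx (spectral_diag A) *m P.
Proof.
rewrite -invmx_unitary ?spectral_unitarymx //.
exact/orthomx_spectralP/hermitian_normalmx.
Qed.

Lemma char_poly_spectral : char_poly A = \prod_l ('X - (d l)%:P).
Proof.
rewrite {1}A_spectral -invmx_unitary ?spectral_unitarymx //.
rewrite char_poly_conj ?spectral_unit // char_poly_trig ?diag_mx_is_trig //.
by apply: eq_bigr => l _; rewrite mxE eqxx mulr1n.
Qed.

Lemma spectral_diag_cases l : [\/ d l = r, d l = s, d l = 2 | d l = -1].
Proof.
have : (char_poly A).[d l] = 0.
  by rewrite char_poly_spectral horner_prod (bigD1 l) //= hornerXsubC subrr mul0r.
rewrite charA !hornerE => /eqP; rewrite !mulf_eq0 !expf_eq0 !subr_eq0.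
case/orP => [/orP [/orP [/eqP-> | /eqP->] | /andP [_ /eqP->]] | /andP [_ dl1]].
- by constructor 1.
- by constructor 2.
- by constructor 3.
by constructor 4; apply/eqP; rewrite -subr_eq0 opprK.
Qed.

Lemma eigen_simple (t : algC) (Q : {poly algC}) :
  char_poly A = ('X - t%:P) * Q -> Q.[t] != 0 ->
  forall i j, d i = t -> d j = t -> i = j.
Proof.
rewrite char_poly_spectral => chiE Qt_neq0 i j di dj; apply/eqP/negPn/negP => ij.
move: chiE; rewrite (bigD1 i) // (bigD1 j) /=; last by rewrite eq_sym.
rewrite di dj => /(mulfI (negbT (polyXsubC_eq0 t))) QE.
by move: Qt_neq0; rewrite -QE hornerM hornerXsubC subrr mul0r eqxx.
Qed.

Let N1_lt_2 : -1 < 2 :> algC.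
Proof. by rewrite (lt_trans (ltrN10 _)) ?ltr0n. Qed.
Let s_lt2 : s < 2. Proof. exact: lt_trans s_ltN1 N1_lt_2. Qed.
Let N1_lt_r : -1 < r. Proof. exact: lt_trans N1_lt_2 r_gt2. Qed.
Let s_lt_r : s < r. Proof. exact: lt_trans s_lt2 r_gt2. Qed.

Let q (t : algC) := (t - 2) * (t + 1).

Let q_ge0 : 0 <= q r /\ 0 <= q s.
Proof.
split; [apply: mulr_ge0 | apply: mulr_le0].
- by rewrite subr_ge0 ltW.
- by rewrite -lerBlDr sub0r ltW.
- by rewrite subr_le0 ltW.
- by rewrite -lerBrDr sub0r ltW.
Qed.

Let r_simple i j : d i = r -> d j = r -> i = j.
Proof.
apply: (@eigen_simple r (('X - s%:P) * ('X - 2%:P) ^+ a * ('X + 1) ^+ b)).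
  by rewrite charA !mulrA.
rewrite !hornerE !mulf_neq0 ?expf_neq0 //.
- by rewrite subr_eq0 gt_eqF.
- by rewrite subr_eq0 gt_eqF.
- by rewrite gt_eqF // -ltrBlDr sub0r.
Qed.

Let s_simple i j : d i = s -> d j = s -> i = j.
Proof.
apply: (@eigen_simple s (('X - r%:P) * ('X - 2%:P) ^+ a * ('X + 1) ^+ b)).
  by rewrite charA !mulrA [('X - r%:P) * _]mulrC.
rewrite !hornerE !mulf_neq0 ?expf_neq0 //.
- by rewrite subr_eq0 lt_eqF.
- by rewrite subr_eq0 lt_eqF.
- by rewrite lt_eqF // -ltrBrDr sub0r.
Qed.

Let eigencol t : 'cV[algC]_n := \col_l ((d l == t)%:R * sqrtC (q t)).

Let gram_factor : 'M[algC]_(n, 1 + 1) := row_mx (eigencol r) (eigencol s).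

Let gram_factorK : gram_factor *m gram_factor^t* = diag_mx (\row_l q (d l)).
Proof.
rewrite tr_row_mx map_col_mx mul_row_col.
have [qr_ge0 qs_ge0] := q_ge0.
have sqrt_pair (x y : bool) t : 0 <= q t ->
    x%:R * sqrtC (q t) * (y%:R * (sqrtC (q t))^*) = (x && y)%:R * q t.
  by move=> qt_ge0; rewrite mulrACA sqrtC_mul_conj // -natrM mulnb.
apply/matrixP => l l'; rewrite !mxE !big_ord1 !mxE !rmorphM /= !conjC_nat !sqrt_pair //.
have q2 : q 2 = 0 by rewrite /q subrr mul0r.
have qN1 : q (-1) = 0 by rewrite /q addNr mulr0.
case: (eqVneq l l') => [<- | ll'].
  rewrite !andbb mulr1n; case: (spectral_diag_cases l) => ->.
  - by rewrite eqxx (gt_eqF s_lt_r) mul1r mul0r addr0.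
  - by rewrite eqxx (lt_eqF s_lt_r) mul1r mul0r add0r.
  - by rewrite q2 (lt_eqF r_gt2) (gt_eqF s_lt2) !mul0r addr0.
  - by rewrite qN1 (lt_eqF N1_lt_r) (gt_eqF s_ltN1) !mul0r addr0.
have simple_pair t : (forall i j, d i = t -> d j = t -> i = j) ->
    (d l == t) && (d l' == t) = false.
  move=> t_simple; apply/negbTE/andP => -[/eqP dl /eqP dl'].
  by rewrite (t_simple _ _ dl dl') eqxx in ll'.
by rewrite mulr0n !simple_pair // !mul0r addr0.
Qed.

Lemma herm_spectrum_F_gram : exists G : 'M[algC]_(n, 2), A *m A - A - 2%:M = G *m G^t*.
Proof.
exists (P^t* *m gram_factor).
have PtP : P^t* *m P = 1%:M by apply/mulmx1C/unitarymxP/spectral_unitarymx.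
have PPt : P *m P^t* = 1%:M by apply/unitarymxP/spectral_unitarymx.
rewrite trmx_mul map_mxM trmxCK !mulmxA -(mulmxA _ gram_factor) gram_factorK.
have -> : diag_mx (\row_l q (d l)) =
    diag_mx (spectral_diag A) *m diag_mx (spectral_diag A)
    - diag_mx (spectral_diag A) - 2%:M.
  apply/matrixP => i j; rewrite mul_diag_mx !mxE.
  by case: (i == j); rewrite /q ?mulr1n ?mulr0n ?subr0 ?mulr0 //; ring.
rewrite mulmxBr mulmxBl mulmxBr mulmxBl -A_spectral; congr (_ - _ - _).
  by rewrite {1 2}A_spectral -!mulmxA (mulmxA P) PPt mul1mx !mulmxA.
by rewrite mul_mx_scalar -scalemxAl PtP scalemx1.
Qed.

End HermitianGram.

Definition mxv n (M : 'M[algC]_n) (x : 'I_n -> algC) (i : 'I_n) : algC :=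
  \sum_j M i j * x j.

Lemma mxvM n (M N : 'M[algC]_n) x i : mxv (M *m N) x i = mxv M (mxv N x) i.
Proof.
rewrite /mxv; under eq_bigr => j _ do rewrite mxE mulr_suml.
rewrite exchange_big /=; apply: eq_bigr => l _; rewrite mulr_sumr.
by apply: eq_bigr => j _; rewrite mulrA.
Qed.

Lemma mxvB n (M N : 'M[algC]_n) x i : mxv (M - N) x i = mxv M x i - mxv N x i.
Proof.
by rewrite /mxv -sumrB; apply: eq_bigr => j _; rewrite !mxE mulrBl.
Qed.

Lemma mxv_scalar n (a : algC) x (i : 'I_n) : mxv a%:M x i = a * x i.
Proof.
rewrite /mxv (bigD1 i) //= big1 ?addr0 => [|j ji]; first by rewrite mxE eqxx mulr1n.
by rewrite mxE eq_sym (negbTE ji) mulr0n mul0r.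
Qed.

Lemma mxv_comb n k (M : 'M[algC]_n) (c : 'rV[algC]_k) (p : 'I_k -> 'I_n) w :
  mxv M (fun j => \sum_l c 0 l * (j == p l)%:R) w = \sum_l c 0 l * M w (p l).
Proof.
rewrite /mxv; under eq_bigr => j _ do rewrite mulr_sumr.
rewrite exchange_big /=; apply: eq_bigr => l _.
rewrite (bigD1 (p l)) //= eqxx mulr1 big1 => [|j /negbTE->]; last by rewrite !mulr0.
by rewrite addr0 mulrC.
Qed.

Lemma form_mxv_sqr n (M : 'M[algC]_n) x : M^t* = M ->
  \sum_i (x i)^* * mxv M (mxv M x) i = \sum_l (mxv M x l)^* * mxv M x l.
Proof.
move=> M_herm; have M_conj i j : (M i j)^* = M j i by rewrite -{2}M_herm !mxE.
rewrite /mxv; under eq_bigr => i _ do rewrite mulr_sumr.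
rewrite exchange_big /=; apply: eq_bigr => l _.
rewrite rmorph_sum mulr_suml; apply: eq_bigr => i _.
by rewrite rmorphM /= M_conj mulrA [_ * M i l]mulrC.
Qed.

Lemma gram_kernel n m k (G : 'M[algC]_(n, m)) (xs : 'I_k -> 'I_n -> algC) :
  (m < k)%N -> exists2 c : 'rV[algC]_k, c != 0 &
    forall i, mxv (G *m G^t*) (fun j => \sum_l c 0 l * xs l j) i = 0.
Proof.
move=> m_lt_k; pose B : 'M_(k, m) := \matrix_(l, a) \sum_j (G j a)^* * xs l j.
have : kermx B != 0.
  by rewrite kermx_eq0 /row_free ltn_eqF // (leq_ltn_trans (rank_leq_col B)).
case/rowV0Pn => c /sub_kermxP cB c_neq0; exists c => // i.
rewrite /mxv; under eq_bigr => j _ do rewrite mxE mulr_suml.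
rewrite exchange_big big1 //= => a _.
apply: (@etrans _ _ (G i a * (c *m B) 0 a)); last by rewrite cB mxE mulr0.
under eq_bigr => j _ do rewrite mxE mulr_sumr.
rewrite exchange_big mxE mulr_sumr; apply: eq_bigr => l _.
rewrite mxE !mulr_sumr; apply: eq_bigr => j _; rewrite mxE; ring.
Qed.

Definition adjq n (e : rel 'I_n) : 'M[algC]_n := adjmx e *m adjmx e - adjmx e - 2%:M.

Lemma mxv_adjq n (e : rel 'I_n) x i :
  mxv (adjq e) x i =
  mxv (adjmx e) (mxv (adjmx e) x) i - mxv (adjmx e) x i - 2 * x i.
Proof. by rewrite !mxvB mxvM mxv_scalar. Qed.

Lemma adjmx_trC n (e : rel 'I_n) : symmetric e -> (adjmx e)^t* = adjmx e.
Proof. by move=> e_sym; apply/matrixP => i j; rewrite !mxE conjC_nat e_sym. Qed.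

Lemma adjmx_herm n (e : rel 'I_n) : symmetric e -> adjmx e \is hermsymmx.
Proof. by move=> e_sym; apply/is_hermitianmxP; rewrite expr0 scale1r adjmx_trC. Qed.

Lemma is_cliqueP n (e : rel 'I_n) (C : {set 'I_n}) :
  reflect (forall i j, i \in C -> j \in C -> i != j -> e i j) (is_clique e C).
Proof.
apply: (iffP forall_inP) => [C_clique i j iC jC | C_clique i iC].
  by have /forall_inP/(_ j jC)/implyP := C_clique i iC; apply.
by apply/forall_inP => j jC; apply/implyP; apply: C_clique.
Qed.

Lemma clique_rel n (e : rel 'I_n) (C : {set 'I_n}) i j :
  irreflexive e -> is_clique e C -> i \in C -> j \in C -> e i j = (i != j).
Proof.
move=> e_irr /is_cliqueP C_clique iC jC.
by case: eqVneq => [->|ij]; [apply: e_irr | apply: C_clique].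
Qed.

Section CliqueSupported.

Variables (n : nat) (e : rel 'I_n) (C : {set 'I_n}) (x : 'I_n -> algC).
Hypotheses (e_sym : symmetric e) (e_irr : irreflexive e) (C_clique : is_clique e C).
Hypothesis x_supp : forall j, j \notin C -> x j = 0.

Local Notation A := (adjmx e).
Local Notation S := (\sum_(j in C) x j).

Lemma mxv_supp (M : 'M[algC]_n) w : mxv M x w = \sum_(j in C) M w j * x j.
Proof.
rewrite /mxv (bigID (mem C)) /= [X in _ + X]big1 ?addr0 // => j /x_supp ->.
by rewrite mulr0.
Qed.

Lemma mxv_adj_clique l : l \in C -> mxv A x l = S - x l.
Proof.
move=> lC; rewrite mxv_supp (bigD1 l lC) /= [in RHS](bigD1 l lC) /= mxE e_irr.
rewrite mul0r add0r [x l + _]addrC addrK; apply: eq_bigr => j /andP [jC jl].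
by rewrite mxE (clique_rel e_irr C_clique) // eq_sym jl mul1r.
Qed.

Lemma form_adjq_clique :
  \sum_i (x i)^* * mxv (adjq e) x i =
  (#|C|%:R - 3) * (S^* * S) + \sum_(l | l \notin C) (mxv A x l)^* * mxv A x l.
Proof.
have restrict (F : 'I_n -> algC) : \sum_i (x i)^* * F i = \sum_(i in C) (x i)^* * F i.
  rewrite (bigID (mem C)) /= [X in _ + X]big1 ?addr0 // => j /x_supp ->.
  by rewrite rmorph0 mul0r.
under eq_bigr => i _ do rewrite mxv_adjq !mulrBr.
rewrite !big_split /= !sumrN form_mxv_sqr ?adjmx_trC // (bigID (mem C)) /= !restrict.
under eq_bigr => i iC do rewrite mxv_adj_clique //.
under [X in _ - X - _]eq_bigr => i iC do rewrite mxv_adj_clique //.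
set Q := \sum_(i in C) (x i)^* * x i.
have E1 : \sum_(i in C) (x i)^* * (2 * x i) = 2 * Q.
  by rewrite /Q mulr_sumr; apply: eq_bigr => i _; rewrite mulrCA.
have E2 : \sum_(i in C) (x i)^* * (S - x i) = S^* * S - Q.
  under eq_bigr => i _ do rewrite mulrBr.
  by rewrite big_split /= sumrN -mulr_suml -rmorph_sum.
have E3 : \sum_(i in C) (S - x i)^* * (S - x i) =
    #|C|%:R * (S^* * S) - S^* * S - S^* * S + Q.
  under eq_bigr => i _ do rewrite rmorphB /= mulrBl !mulrBr.
  rewrite !big_split /= !sumrN sumr_const -mulr_sumr big_split /= sumrN -mulr_suml.
  by rewrite -rmorph_sum -/Q mulr_natl; ring.
by rewrite E1 E2 E3; ring.
Qed.

Lemma adjq_kernel_clique : (3 <= #|C|)%N -> (forall i, mxv (adjq e) x i = 0) ->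
  forall l, l \notin C -> mxv A x l = 0.
Proof.
move=> C_ge3 qx0 l lC; have := form_adjq_clique.
rewrite big1 => [|i _]; last by rewrite qx0 mulr0.
have sq_ge0 (z : algC) : 0 <= z^* * z by rewrite mulrC mul_conjC_ge0.
move/esym/eqP; rewrite paddr_eq0; first last.
- by apply: sumr_ge0 => i _; apply: sq_ge0.
- by rewrite mulr_ge0 ?sq_ge0 // subr_ge0 (ler_nat _ 3).
case/andP => _ /eqP out0.
have /eqP := psumr_eq0P (fun i _ => sq_ge0 (mxv A x i)) out0 lC.
by rewrite mulrC mul_conjC_eq0 => /eqP.
Qed.

Lemma card_nbrs_in v : #|nbrs_in e v C| = (\sum_(l in C) e v l)%N.
Proof.
rewrite -sum1_card big_mkcond [RHS]big_mkcond /=; apply: eq_bigr => l _.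
by rewrite inE; case: (l \in C); case: (e v l).
Qed.

Lemma mxv_adjq_outside v : (forall l, l \notin C -> mxv A x l = 0) -> v \notin C ->
  mxv (adjq e) x v = #|nbrs_in e v C|%:R * S.
Proof.
move=> Ax_out vC; rewrite mxv_adjq Ax_out // x_supp // mulr0 !subr0.
rewrite [mxv A _ v]/mxv (bigID (mem C)) /= [X in _ + X]big1 => [|l /Ax_out ->];
  last by rewrite mulr0.
rewrite addr0.
under eq_bigr => l lC do rewrite mxv_adj_clique // mulrBr.
rewrite big_split /= sumrN -mulr_suml -mxv_supp Ax_out // subr0.
by rewrite card_nbrs_in natr_sum; congr (_ * _); apply: eq_bigr => l _; rewrite mxE.
Qed.

End CliqueSupported.

Lemma three_patterns (T : finType) (C X Y : {set T}) :
  X \subset C -> Y \subset C -> X != set0 -> X != C -> Y != set0 -> Y != C ->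
  Y != X -> Y != C :\: X ->
  exists p : 'I_3 -> T,
    (forall k, p k \in C) /\ injective (fun k => (p k \in X, p k \in Y)).
Proof.
move=> XC YC /set0Pn [x xX] XnC /set0Pn [y yY] YnC YnX YnCX.
have /properP [_ [x' x'C x'X]] : X \proper C by rewrite properEneq XnC.
have /properP [_ [y' y'C y'Y]] : Y \proper C by rewrite properEneq YnC.
have [q qC qXY] : exists2 q, q \in C & (q \in X) != (q \in Y).
  case: (pickP [pred q | (q \in X) != (q \in Y)]) => [q /= qXY | same].
    exists q => //; move: qXY; case: (boolP (q \in X)) => [/(subsetP XC) //|_].
    by case qY: (q \in Y) => // _; apply: (subsetP YC).
  by case/eqP: YnX; apply/setP => z; have /= := same z; case: (_ \in X); case: (_ \in Y).
have [q' q'C q'XY] : exists2 q', q' \in C & (q' \in X) == (q' \in Y).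
  case: (pickP [pred z | (z \in C) && ((z \in X) == (z \in Y))]) => [z /= /andP [] | diff].
    by exists z.
  case/eqP: YnCX; apply/setP => z; have /= := diff z; rewrite !inE.
  case zC: (z \in C); last first.
    by rewrite andbF => _; apply: contraFF zC => /(subsetP YC).
  by case: (_ \in X); case: (_ \in Y).
pose t := if q \in X then (if q' \in X then x' else y) else (if q' \in X then y' else x).
have tC : t \in C.
  rewrite /t; case: ifP => _; case: ifP => _ //.
  - exact: (subsetP YC).
  - exact: (subsetP XC).
pose pat z := (z \in X, z \in Y).
exists (tnth [tuple q; q'; t]); split.
  by move=> k; have := mem_tnth k [tuple q; q'; t]; rewrite !inE => /or3P [] /eqP ->.
apply: (@eq_inj _ _ (tnth (map_tuple pat [tuple q; q'; t]))) => [|k];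
  last by rewrite tnth_map.
apply/tuple_uniqP => /=; rewrite !inE /pat /t !xpair_eqE.
move: qXY q'XY; case: (q \in X); case: (q \in Y) => //= _;
  case: (q' \in X); case: (q' \in Y) => //= _.
all: by rewrite ?(negbTE x'X) ?(negbTE y'Y) ?xX ?yY /= ?andbF.
Qed.

Lemma sum_ord3 (F : 'I_3 -> algC) : \sum_k F k = F 0 + F 1 + F 2.
Proof.
by rewrite !big_ord_recr big_ord0 /= add0r; congr (F _ + F _ + F _); apply: val_inj.
Qed.

Lemma corner_det_neq0 (x0 x1 x2 y0 y1 y2 : bool) :
  (x0, y0) != (x1, y1) -> (x0, y0) != (x2, y2) -> (x1, y1) != (x2, y2) ->
  ((x1%:Z - x0%:Z) * (y2%:Z - y0%:Z) - (x2%:Z - x0%:Z) * (y1%:Z - y0%:Z))%R != 0.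
Proof. by case: x0; case: x1; case: x2; case: y0; case: y1; case: y2. Qed.

Lemma corners_affine_free (c : 'rV[algC]_3) (tau : 'I_3 -> bool * bool) :
  injective tau -> \sum_k c 0 k = 0 ->
  \sum_k c 0 k * (tau k).1%:R = 0 -> \sum_k c 0 k * (tau k).2%:R = 0 -> c = 0.
Proof.
move=> tau_inj; rewrite !sum_ord3 => E0 E1 E2.
have d01 : tau 0 != tau 1 by rewrite (inj_eq tau_inj).
have d02 : tau 0 != tau 2 by rewrite (inj_eq tau_inj).
have d12 : tau 1 != tau 2 by rewrite (inj_eq tau_inj).
suff [c0 c1 c2] : [/\ c 0 0 = 0, c 0 1 = 0 & c 0 2 = 0].
  apply/rowP => k; rewrite mxE.
  by case: k => [[|[|[|//]]] ?]; [rewrite -c0 | rewrite -c1 | rewrite -c2];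
    congr (c 0 _); apply: val_inj.
move: d01 d02 d12 E1 E2; case: (tau 0) => x0 y0; case: (tau 1) => x1 y1.
case: (tau 2) => x2 y2 /= d01 d02 d12 E1 E2.
set s0 := c 0 0 + _ + _ in E0; set s1 := _ + _ + _ in E1; set s2 := _ + _ + _ in E2.
pose D : int := ((x1%:Z - x0%:Z) * (y2%:Z - y0%:Z) - (x2%:Z - x0%:Z) * (y1%:Z - y0%:Z))%R.
have /negbTE D_neq0 : D%:~R != 0 :> algC by rewrite intr_eq0 corner_det_neq0.
have /eqP : D%:~R * c 0 1 = 0.
  transitivity ((y2%:R - y0%:R) * (s1 - x0%:R * s0) - (x2%:R - x0%:R) * (s2 - y0%:R * s0)).
    by rewrite /D /s0 /s1 /s2; ring.
  by rewrite E0 E1 E2; ring.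
have /eqP : D%:~R * c 0 2 = 0.
  transitivity ((x1%:R - x0%:R) * (s2 - y0%:R * s0) - (y1%:R - y0%:R) * (s1 - x0%:R * s0)).
    by rewrite /D /s0 /s1 /s2; ring.
  by rewrite E0 E1 E2; ring.
rewrite !mulf_eq0 D_neq0 /= => /eqP c2 /eqP c1.
by split => //; move: E0; rewrite /s0 c1 c2 !addr0.
Qed.

Lemma nbrs_in_sub n (e : rel 'I_n) (v : 'I_n) (C : {set 'I_n}) : nbrs_in e v C \subset C.
Proof. by apply/subsetP => z; rewrite inE => /andP []. Qed.

Lemma nbrs_in_eq_or_compl n (e : rel 'I_n) (G : 'M[algC]_(n, 2)) (C : {set 'I_n}) u v :
  symmetric e -> irreflexive e -> adjq e = G *m G^t* -> is_clique e C ->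
  u \notin C -> v \notin C ->
  nbrs_in e u C != set0 -> nbrs_in e u C != C ->
  nbrs_in e v C != set0 -> nbrs_in e v C != C ->
  nbrs_in e v C = nbrs_in e u C \/ nbrs_in e v C = C :\: nbrs_in e u C.
Proof.
move=> e_sym e_irr adjq_gram C_clique uC vC Nu0 NuC Nv0 NvC.
case: (eqVneq (nbrs_in e v C) (nbrs_in e u C)) => [|NvNu]; first by left.
case: (eqVneq (nbrs_in e v C) (C :\: nbrs_in e u C)) => [|NvCNu]; first by right.
exfalso; have [p [pC pat_inj]] := three_patterns (nbrs_in_sub e u C) (nbrs_in_sub e v C)
  Nu0 NuC Nv0 NvC NvNu NvCNu.
have [c c_neq0 x_ker] := gram_kernel G (fun k j => (j == p k)%:R) (isT : (2 < 3)%N).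
rewrite -adjq_gram in x_ker; set x := fun j => _ in x_ker.
have x_supp j : j \notin C -> x j = 0.
  move=> jC; rewrite /x big1 // => k _.
  by rewrite (_ : (j == p k) = false) ?mulr0 //; apply: contraNF jC => /eqP ->.
have C_ge3 : (3 <= #|C|)%N.
  have p_inj : injective p by move=> k k' pkk'; apply: pat_inj; rewrite pkk'.
  rewrite -[3%N]card_ord -(card_imset _ p_inj); apply/subset_leq_card.
  by apply/subsetP => _ /imsetP [k _ ->].
have Ax_out := adjq_kernel_clique e_sym e_irr C_clique x_supp C_ge3 x_ker.
have Ax w : mxv (adjmx e) x w = \sum_k c 0 k * (e w (p k))%:R.
  by rewrite mxv_comb; apply: eq_bigr => k _; rewrite mxE.
apply: (negP c_neq0); apply/eqP/(corners_affine_free pat_inj) => /=.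
- have := x_ker u; rewrite (mxv_adjq_outside e_irr C_clique x_supp Ax_out uC) => /eqP.
  rewrite mulf_eq0 pnatr_eq0 cards_eq0 (negbTE Nu0) /= => /eqP S0.
  rewrite -[RHS]S0 /x exchange_big; apply: eq_bigr => k _.
  rewrite (bigD1 (p k)) //= eqxx mulr1 big1 ?addr0 // => j /andP [_ /negbTE ->].
  by rewrite mulr0.
- by rewrite -[RHS](Ax_out u uC) Ax; apply: eq_bigr => k _; rewrite inE pC.
- by rewrite -[RHS](Ax_out v vC) Ax; apply: eq_bigr => k _; rewrite inE pC.
Qed.

Lemma max_clique_nbrs_in_neq n (e : rel 'I_n) (C : {set 'I_n}) v :
  symmetric e -> is_max_clique e C -> v \notin C -> nbrs_in e v C != C.
Proof.
move=> e_sym [C_clique C_max] vC; apply/eqP => NvC.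
have nbr_v j : j \in C -> e v j by rewrite -NvC inE => /andP [].
have : is_clique e (v |: C).
  apply/is_cliqueP => i j; rewrite !in_setU1 => /predU1P [-> | iC] /predU1P [-> | jC].
  - by rewrite eqxx.
  - by move=> _; apply: nbr_v.
  - by move=> _; rewrite e_sym; apply: nbr_v.
  - exact: (is_cliqueP _ _ C_clique).
by move/C_max; rewrite cardsU1 vC ltnn.
Qed.

Lemma max_clique_card_ge2 n (e : rel 'I_n) (C : {set 'I_n}) i j :
  symmetric e -> irreflexive e -> is_max_clique e C -> e i j -> (2 <= #|C|)%N.
Proof.
move=> e_sym e_irr [_ C_max] eij.
have ij : i != j by apply: contraTneq eij => ->; rewrite e_irr.
have : is_clique e [set i; j].
  apply/is_cliqueP => k l.
  by rewrite !inE => /orP [] /eqP -> /orP [] /eqP ->; rewrite ?eqxx // e_sym.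
by move/C_max; rewrite cards2 ij.
Qed.

Lemma gram_adjq_nbr n (e : rel 'I_n) (G : 'M[algC]_(n, 2)) i :
  irreflexive e -> adjq e = G *m G^t* -> exists j, e i j.
Proof.
move=> e_irr adjq_gram; apply/existsP; apply: contraTT (mulmx_trC_ge0 G i).
move=> /existsPn no_nbr; rewrite -adjq_gram !mxE big1 => [|l _]; last first.
  by rewrite !mxE (negbTE (no_nbr l)) mul0r.
by rewrite e_irr eqxx mulr1n subr0 sub0r lt_geF // oppr_lt0 ltr0n.
Qed.

Lemma proper_subset_split (T : finType) (X C : {set T}) :
  X \subset C -> X != set0 -> X != C ->
  [/\ X != set0, C :\: X != set0, [disjoint X & C :\: X] & X :|: (C :\: X) = C].
Proof.
move=> XC X0 XnC; split => //.
- by rewrite setD_eq0; apply: contra XnC => CX; rewrite eqEsubset XC.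
- by rewrite disjoint_subset; apply/subsetP => y; rewrite !inE => ->.
- by apply/setP => y; rewrite !inE; case: (boolP (y \in X)) => // /(subsetP XC).
Qed.

Theorem lemma4p1 (n : nat) (e : rel 'I_n) (C : {set 'I_n}) :
  in_F e ->
  is_max_clique e C ->
  (forall D : {set 'I_n}, is_max_clique e D ->
     (boundary_edges e C <= boundary_edges e D)%N) ->
  exists X Y : {set 'I_n},
    [/\ X != set0, Y != set0, [disjoint X & Y], X :|: Y = C &
     forall v : 'I_n, v \notin C ->
       nbrs_in e v C = X \/ nbrs_in e v C = Y \/ nbrs_in e v C = set0].
Proof.
move=> [[e_sym e_irr] [[n_gt0 _] [r [s [a [b [r_gt2 [s_ltN1 charA]]]]]]]] C_max _.
have [G adjq_gram] := herm_spectrum_F_gram (adjmx_herm e_sym) r_gt2 s_ltN1 charA.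
have NvC v : v \notin C -> nbrs_in e v C != C := max_clique_nbrs_in_neq e_sym C_max.
case: (pickP [pred u | (u \notin C) && (nbrs_in e u C != set0)]) => [u | none].
  case/andP=> uC Nu0.
  have [X0 Y0 dXY XYC] := proper_subset_split (nbrs_in_sub e u C) Nu0 (NvC u uC).
  exists (nbrs_in e u C), (C :\: nbrs_in e u C); split => // v vC.
  have [-> | Nv0] := eqVneq (nbrs_in e v C) set0; first by right; right.
  have [] := nbrs_in_eq_or_compl e_sym e_irr adjq_gram C_max.1 uC vC
    Nu0 (NvC u uC) Nv0 (NvC v vC).
    by left.
  by right; left.
have [j eij] := gram_adjq_nbr (Ordinal n_gt0) e_irr adjq_gram.
have C_ge2 := max_clique_card_ge2 e_sym e_irr C_max eij.
have [p pC] : exists p, p \in C by apply/set0Pn; rewrite -card_gt0 (leq_trans _ C_ge2).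
have pnC : [set p] != C by apply: contraTneq C_ge2 => <-; rewrite cards1.
have pC' : [set p] \subset C by rewrite sub1set.
have p0 : [set p] != set0 by apply/set0Pn; exists p; rewrite set11.
have [X0 Y0 dXY XYC] := proper_subset_split pC' p0 pnC.
exists [set p], (C :\: [set p]); split => // v vC; right; right.
by have /= := none v; rewrite vC => /negbFE/eqP.
Qed.
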